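(* For a veering triangulation $\tau$ of $M$, there is a surjective $\mathbb{Z}[G]$-module homomorphism $\mathcal{E}(\tilde\tau)\to\mathcal{E}^\triangle(\tilde\tau)$ (induced by the identity on the free module on edges of $\tilde\tau$), and consequently $\Theta_\tau$ divides $V_\tau$ in $\mathbb{Z}[G]$.
   Context: $\tau$ is a veering triangulation of $M$ (taut ideal triangulation with cooriented faces, each tetrahedron having two bottom and two top faces, a bottom edge, a top edge and four side edges, angle sum $2\pi$ around edges, with a consistent right/left veer on edges modelled on a thickened rhombus whose side edges of positive slope are right-veering and of negative slope left-veering). $E$, $F$ denote the sets of edges and faces of $\tau$. $G=H_1(M;\mathbb{Z})/\mathrm{torsion}$, $\hat M$ the corresponding (universal free abelian) cover with deck group $G$, $\tilde\tau$ the lifted triangulation. Tetrahedron relation of a tetrahedron with bottom edge $\mathbf b$, top edge $\mathbf t$: $\mathbf b=\mathbf t+\mathbf s_1+\mathbf s_2$ where $\mathbf s_1,\mathbf s_2$ are the side edges of veer opposite to $\mathbf t$. Face relation of a face $f$: $\mathbf b=\mathbf x+\mathbf y$ where $\mathbf b$ is the bottom edge of the unique tetrahedron having $f$ as a bottom face and $\mathbf x,\mathbf y$ are the other edges of $f$. The edge module $\mathcal{E}(\tilde\tau)$ is the free $\mathbb{Z}$-module on edges of $\tilde\tau$ modulo the tetrahedron relations of all tetrahedra of $\tilde\tau$; choosing lifts of edges it is the cokernel of $L:\mathbb{Z}[G]^E\to\mathbb{Z}[G]^E$ sending each edge $\mathbf b$ to $\mathbf b-(\mathbf t+\mathbf s_1+\mathbf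 s_2)$ for the tetrahedron above it, and the veering polynomial is $V_\tau=\det L\in\mathbb{Z}[G]$. The face module $\mathcal{E}^\triangle(\tilde\tau)$ is the free module on edges of $\tilde\tau$ modulo all face relations, i.e. the cokernel of $L^\triangle:\mathbb{Z}[G]^F\to\mathbb{Z}[G]^E$, $f\mapsto \mathbf b-(\mathbf x+\mathbf y)$; the taut polynomial $\Theta_\tau$ is the gcd of the $|E|\times|E|$ minors of $L^\triangle$, defined up to a unit $\pm g$. *)

From HB Require Import structures.
From mathcomp Require Import all_boot all_order all_algebra all_fingroup.
From mathcomp Require Import fraction.
From mathcomp Require Import mpoly.

Set Implicit Arguments.
Unset Strict Implicit.
Unset Printing Implicit Defensive.

Import Order.TTheory GRing.Theory Num.Theory.
Local Open Scope ring_scope.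

(* Each tetrahedron has its four (ideal) vertices labelled N,E,S,W           *)
(* (= 0,1,2,3).  Viewed from above (rhombus model) the bottom edge is NS,     *)
(* the top edge is EW, the side edges are NE, ES, SW, WN.  The vertex         *)
(* labelling of each tetrahedron fixes its orientation.                      *)
(* Faces of a tetrahedron are indexed by the omitted vertex: the faces        *)
(* omitting E or W contain NS (bottom faces), the faces omitting N or S       *)
(* contain EW (top faces).                                                   *)

Definition vN : 'I_4 := @Ordinal 4 0 isT.
Definition vE : 'I_4 := @Ordinal 4 1 isT.
Definition vS : 'I_4 := @Ordinal 4 2 isT.
Definition vW : 'I_4 := @Ordinal 4 3 isT.

Record triangulation_data (T Ed F : finType) := TriData {
  tedge : T -> 'I_4 -> 'I_4 -> Ed;
  tface : T -> 'I_4 -> F;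
  (* each face f is a top face of lowT f (opposite vertex lowv f) ... *)
  lowT : F -> T;
  lowv : F -> 'I_4;
  (* ... and a bottom face of upT f (opposite vertex upv f) *)
  upT : F -> T;
  upv : F -> 'I_4;
  (* face pairing: vertex a of lowT f is glued to vertex glue f a of upT f *)
  glue : F -> {perm 'I_4};
  (* veer of edges: true = right-veering, false = left-veering *)
  veer : Ed -> bool
}.

Section Veering.
Variables (T Ed F : finType) (D : triangulation_data T Ed F).

(* oriented edge occurrences (t, a, b) *)
Definition occ := (T * 'I_4 * 'I_4)%type.

(* the face gluing along f identifies the occurrence o (in lowT f) with o'
   (in upT f) *)
Definition glue_step (f : F) (o o' : occ) : bool :=
  [&& o.1.1 == lowT D f, o'.1.1 == upT D f,
      o.1.2 != lowv D f, o.2 != lowv D f,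
      o'.1.2 == glue D f o.1.2 & o'.2 == glue D f o.2].

Definition glue_rel : rel occ :=
  fun o o' => [exists f, glue_step f o o' || glue_step f o' o].

Definition dual_adj : rel T :=
  fun t t' => [exists f, ((lowT D f == t) && (upT D f == t'))
                       || ((lowT D f == t') && (upT D f == t))].

Definition side_edges : seq ('I_4 * 'I_4) :=
  [:: (vN, vE); (vE, vS); (vS, vW); (vW, vN)].

Definition is_veering : Prop :=
  (forall t a b, tedge D t a b = tedge D t b a) /\
  (* each face is a top face of exactly one tetrahedron and a bottom face of
     exactly one tetrahedron (coorientation of faces) *)
  (forall f, tface D (lowT D f) (lowv D f) = f /\
             ((lowv D f == vN) || (lowv D f == vS))) /\
  (forall f, tface D (upT D f) (upv D f) = f /\
             ((upv D f == vE) || (upv D f == vW))) /\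
  (forall f t v, tface D t v = f ->
      (t, v) = (lowT D f, lowv D f) \/ (t, v) = (upT D f, upv D f)) /\
  (* face pairings: omitted vertex to omitted vertex, orientation reversing *)
  (forall f, glue D f (lowv D f) = upv D f) /\
  (forall f, odd_perm (glue D f)) /\
  (* the edges of the triangulation are exactly the classes of edge
     occurrences under the face identifications *)
  (forall (t t' : T) (a b a' b' : 'I_4), a != b -> a' != b' ->
      (tedge D t a b = tedge D t' a' b' <->
       connect glue_rel (t, a, b) (t', a', b') \/
       connect glue_rel (t, a, b) (t', b', a'))) /\
  (* no edge is identified with itself in reverse (M is a manifold) *)
  (forall t (a b : 'I_4), a != b -> ~ connect glue_rel (t, a, b) (t, b, a)) /\
  (* M is connected *)
  (forall t t', connect dual_adj t t') /\
  (* taut: angle sum 2pi around each edge, i.e. each edge is the bottom edge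
     of exactly one tetrahedron and the top edge of exactly one *)
  bijective (fun t => tedge D t vN vS) /\
  bijective (fun t => tedge D t vE vW) /\
  (* veering: side edges of negative slope (NE, SW) are left-veering and side
     edges of positive slope (ES, WN) are right-veering *)
  (forall t, veer D (tedge D t vN vE) = false /\ veer D (tedge D t vS vW) = false
          /\ veer D (tedge D t vE vS) = true /\ veer D (tedge D t vW vN) = true).

(* Integer 1-cochains on the dual 2-complex (a spine of M) are functions      *)
(* F -> int (the dual edge of f goes from lowT f to upT f).                   *)

(* eta is a cocycle: it has a potential along every edge cycle *)
Definition cocycle (eta : F -> int) : Prop :=
  exists mu : T -> 'I_4 -> 'I_4 -> int,
    (forall t a b, mu t a b = mu t b a) /\
    (forall f a b, a != lowv D f -> b != lowv D f -> a != b ->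
       mu (lowT D f) a b = eta f + mu (upT D f) (glue D f a) (glue D f b)).

Definition coboundary (eta : F -> int) : Prop :=
  exists h : T -> int, forall f, eta f = h (upT D f) - h (lowT D f).

(* the coordinates of omega form a Z-basis of H^1(M;Z) = Hom(H_1(M), Z);
   equivalently c |-> (omega_i(c))_i induces H_1(M;Z)/torsion ~= Z^r *)
Definition H1_basis (r : nat) (omega : F -> 'rV[int]_r) : Prop :=
  (forall i, cocycle (fun f => omega f ord0 i)) /\
  (forall eta, cocycle eta ->
     exists! k : 'rV[int]_r,
       coboundary (fun f => eta f - \sum_(i < r) k ord0 i * omega f ord0 i)).

(* lam gives the lifted triangulation: choosing a lift of each tetrahedron
   and of each edge e, the copy of the edge occurrence (t,a,b) in the chosen
   lift of t is (lam t a b) . e~ ; the lift of lowT f is glued along f to the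
   (omega f)-translate of the lift of upT f. *)
Definition lift_data (r : nat) (omega : F -> 'rV[int]_r)
    (lam : T -> 'I_4 -> 'I_4 -> 'rV[int]_r) : Prop :=
  (forall t a b, lam t a b = lam t b a) /\
  (forall f a b, a != lowv D f -> b != lowv D f -> a != b ->
     lam (lowT D f) a b = omega f + lam (upT D f) (glue D f a) (glue D f b)).

End Veering.

(* The group ring Z[G], G = Z^r, realised as the ring of Laurent polynomials  *)
(* Z[X_1^(+-1), ..., X_r^(+-1)] inside the fraction field of Z[X_1..X_r].     *)

Definition KG (r : nat) := {fraction {mpoly int[r]}}.

Definition toKG (r : nat) (p : {mpoly int[r]}) : KG r :=
  @FracField.tofrac _ p.

Definition mono (r : nat) (g : 'rV[int]_r) : KG r :=
  \prod_(i < r) toKG ('X_i : {mpoly int[r]}) ^ (g ord0 i).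

Definition inZG (r : nat) (x : KG r) : Prop :=
  exists (p : {mpoly int[r]}) (g : 'rV[int]_r), x = toKG p * mono g.

Definition dvdZG (r : nat) (x y : KG r) : Prop :=
  exists q : KG r, inZG q /\ y = x * q.

Definition is_gcdZG (r : nat) (S : KG r -> Prop) (theta : KG r) : Prop :=
  inZG theta /\ (forall m, S m -> dvdZG theta m) /\
  (forall d, inZG d -> (forall m, S m -> dvdZG d m) -> dvdZG d theta).

Section Matrices.
Variables (T Ed F : finType) (D : triangulation_data T Ed F).
Variables (r : nat) (lam : T -> 'I_4 -> 'I_4 -> 'rV[int]_r).

Local Notation ind b := ((b : bool)%:R : KG r).

(* coefficient of e~ in the image of b~ under L : the tetrahedron relation of
   the (lift of the) tetrahedron t above b (b = bottom edge NS of t):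
   b = t_top + s_1 + s_2, s_i the side edges of veer opposite to t_top *)
Definition Lcoef (b e : Ed) : KG r :=
  ind (b == e) -
  \sum_(t | tedge D t vN vS == b)
     (ind (e == tedge D t vE vW) * mono (lam t vE vW - lam t vN vS) +
      \sum_(p <- side_edges | veer D (tedge D t p.1 p.2) != veer D (tedge D t vE vW))
         ind (e == tedge D t p.1 p.2) * mono (lam t p.1 p.2 - lam t vN vS)).

(* coefficient of e~ in the image of the face f under L^triangle:
   b - (x + y), b the bottom edge of the tetrahedron upT f having f as a
   bottom face, x, y the other edges of f *)
Definition Ltricoef (f : F) (e : Ed) : KG r :=
  let t := upT D f in
  let c := if upv D f == vE then vW else vE in
  ind (e == tedge D t vN vS)
  - ind (e == tedge D t vN c) * mono (lam t vN c - lam t vN vS)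
  - ind (e == tedge D t vS c) * mono (lam t vS c - lam t vN vS).

(* matrices act on row vectors: row i is the image of the i-th basis vector *)
Definition Lmx : 'M[KG r]_(#|Ed|) :=
  \matrix_(i, j) Lcoef (enum_val i) (enum_val j).

Definition Ltrimx : 'M[KG r]_(#|F|, #|Ed|) :=
  \matrix_(i, j) Ltricoef (enum_val i) (enum_val j).

Definition veering_poly : KG r := \det Lmx.

Definition Ltri_minor (m : KG r) : Prop :=
  exists s : 'I_#|Ed| -> 'I_#|F|, injective s /\ m = \det (rowsub s Ltrimx).

End Matrices.

From HB Require Import structures.
From mathcomp Require Import all_boot all_order all_algebra all_fingroup.
From mathcomp Require Import fraction.
From mathcomp Require Import mpoly.
From mathcomp Require Import ring.

Set Implicit Arguments.
Unset Strict Implicit.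
Unset Printing Implicit Defensive.

Import Order.TTheory GRing.Theory Num.Theory.
Local Open Scope ring_scope.

(* Every tetrahedron relation is a Z[G]-combination of face relations, so the
   identity on edges induces E(tau~) -> E^triangle(tau~).  Let t be the
   tetrahedron with bottom edge NS and top edge EW of veer vt, let s be the
   endpoint of EW for which the side edge sS also has veer vt, and o the
   other endpoint.  The tetrahedron relation NS = EW + Ns + So of t is the
   sum of the relation NS = Ns + sS of the bottom face NSs of t and of the
   translate of the relation sS = EW + So of its top face ESW.  The latter is
   the bottom-face relation of the tetrahedron above t, rewritten in the
   coordinates of t: the veers force the face gluing to send sS onto the
   bottom edge of the tetrahedron above (a finite check on the gluing
   permutation, [top_gluing]).  Hence L = C *m L^triangle with C over Z[G]
   ([Lmx_factorization]), and expanding det (C *m L^triangle) as a sum over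
   maps of products of entries of C with square submatrices of L^triangle
   ([det_mulmx_rowsub]) exhibits V_tau as a Z[G]-combination of the maximal
   minors of L^triangle, each divisible by the taut polynomial. *)

(* Expansion of the determinant of a product of an (n x m) by an (m x n)
   matrix as a sum over all maps 'I_n -> 'I_m of products of entries of the
   left factor times square submatrices of rows of the right factor (the
   non-injective maps contribute zero, giving the Cauchy-Binet formula). *)
Lemma det_mulmx_rowsub (R : comPzRingType) n m (C : 'M[R]_(n, m)) (A : 'M[R]_(m, n)) :
  \det (C *m A) =
  \sum_(f : {ffun 'I_n -> 'I_m}) (\prod_i C i (f i)) * \det (rowsub f A).
Proof.
transitivity (\sum_(s : 'S_n) (-1) ^+ s * \sum_(f : {ffun 'I_n -> 'I_m})
     \prod_i (C i (f i) * A (f i) (s i))).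
  apply: eq_bigr => s _; congr (_ * _).
  rewrite -(bigA_distr_bigA (fun i j => C i j * A j (s i))).
  by apply: eq_bigr => i _; rewrite mxE.
under eq_bigr do rewrite big_distrr.
rewrite exchange_big; apply: eq_bigr => f _ /=.
rewrite /determinant big_distrr; apply: eq_bigr => s _ /=.
rewrite big_split /= mulrCA; congr (_ * (_ * _)).
by apply: eq_bigr => i _; rewrite mxE.
Qed.

Section GroupRing.
Variable r : nat.
Local Notation K := (KG r).

Lemma toKG_X_neq0 (i : 'I_r) : toKG ('X_i : {mpoly int[r]}) != 0.
Proof.
rewrite /toKG tofrac_eq0; apply/eqP => X0.
by have := @mcoeffXU r int i i; rewrite X0 mcoeff0 eqxx.
Qed.

Lemma monoD (g h : 'rV[int]_r) : mono (g + h) = mono g * mono h.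
Proof.
rewrite /mono -big_split /=; apply: eq_bigr => i _.
by rewrite mxE expfzDr // toKG_X_neq0.
Qed.

Lemma mono0 : mono (0 : 'rV[int]_r) = 1.
Proof. by rewrite /mono big1 // => i _; rewrite mxE expr0z. Qed.

Lemma mono_split (a b c : 'rV[int]_r) : mono (a - c) = mono (b - c) * mono (a - b).
Proof. by rewrite -monoD [b - c + _]addrC addrA subrK. Qed.

Lemma mono_ge0 (g : 'rV[int]_r) : (forall i, 0 <= g ord0 i) ->
  mono g = toKG (\prod_i 'X_i ^+ `|g ord0 i|%N).
Proof.
move=> g_ge0; rewrite /toKG rmorph_prod; apply: eq_bigr => i _.
by rewrite rmorphXn -{1}(gez0_abs (g_ge0 i)).
Qed.

Lemma inZG_mono (g : 'rV[int]_r) : inZG (mono g).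
Proof. by exists 1, g; rewrite /toKG rmorph1 mul1r. Qed.

Lemma inZG_toKG (p : {mpoly int[r]}) : inZG (toKG p).
Proof. by exists p, 0; rewrite mono0 mulr1. Qed.

Lemma inZG_nat (n : nat) : inZG (n%:R : K).
Proof. by have := inZG_toKG n%:R; rewrite /toKG rmorph_nat. Qed.

Lemma inZG_mul (x y : K) : inZG x -> inZG y -> inZG (x * y).
Proof.
move=> [p [g ->]] [q [h ->]]; exists (p * q), (g + h).
by rewrite monoD /toKG rmorphM mulrACA.
Qed.

(* to add p * X^g and q * X^h, factor out X^k with k = min(g, h) *)
Lemma inZG_add (x y : K) : inZG x -> inZG y -> inZG (x + y).
Proof.
move=> [p [g ->]] [q [h ->]].
pose k : 'rV[int]_r := \row_j Num.min (g ord0 j) (h ord0 j).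
have -> : mono g = mono (g - k) * mono k by rewrite -monoD subrK.
have -> : mono h = mono (h - k) * mono k by rewrite -monoD subrK.
rewrite (@mono_ge0 (g - k)); last by move=> i; rewrite !mxE subr_ge0 ge_min lexx.
rewrite (@mono_ge0 (h - k)); last by move=> i; rewrite !mxE subr_ge0 ge_min lexx orbT.
by eexists; exists k; rewrite /toKG !mulrA -!rmorphM -mulrDl -rmorphD.
Qed.

Lemma inZG_prod (I : Type) (s : seq I) (P : pred I) (F : I -> K) :
  (forall i, P i -> inZG (F i)) -> inZG (\prod_(i <- s | P i) F i).
Proof. by move=> FZ; apply: big_ind => //; [exact: (inZG_nat 1) | exact: inZG_mul]. Qed.

Lemma dvdZG0 (theta : K) : dvdZG theta 0.
Proof. by exists 0; split; [exact: (inZG_nat 0) | rewrite mulr0]. Qed.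

Lemma dvdZG_sum (theta : K) (I : Type) (s : seq I) (P : pred I) (F : I -> K) :
  (forall i, P i -> dvdZG theta (F i)) -> dvdZG theta (\sum_(i <- s | P i) F i).
Proof.
move=> dvdF; apply: big_ind => //; first exact: dvdZG0.
move=> x y [a [aZ ->]] [b [bZ ->]]; exists (a + b).
by split; [exact: inZG_add | rewrite mulrDr].
Qed.

Lemma dvdZG_mull (theta a x : K) : inZG a -> dvdZG theta x -> dvdZG theta (a * x).
Proof.
move=> aZ [q [qZ ->]]; exists (a * q).
by split; [exact: inZG_mul | rewrite mulrCA].
Qed.

Lemma dvdZG_det_mulmx n m (C : 'M[K]_(n, m)) (A : 'M[K]_(m, n)) (theta : K) :
  (forall i j, inZG (C i j)) ->
  (forall s : 'I_n -> 'I_m, injective s -> dvdZG theta (\det (rowsub s A))) ->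
  dvdZG theta (\det (C *m A)).
Proof.
move=> CZ dvd_minors; rewrite det_mulmx_rowsub.
apply: dvdZG_sum => f _; apply: dvdZG_mull; first by apply: inZG_prod.
have [/injectiveP f_inj | /injectivePn[i1 [i2 i12 fi12]]] := boolP (injectiveb f).
  exact: dvd_minors.
rewrite (determinant_alternate i12); first exact: dvdZG0.
by move=> j; rewrite !mxE fi12.
Qed.

End GroupRing.

(* The veer forced on a side edge xy of a tetrahedron by the rhombus model:
   NE and SW (negative slope) are left-veering, ES and WN (positive slope)
   are right-veering; top and bottom edges are not constrained. *)
Definition side_veer (x y : 'I_4) : option bool :=
  match nat_of_ord x, nat_of_ord y with
  | 0, 1 | 1, 0 | 2, 3 | 3, 2 => Some false
  | 1, 2 | 2, 1 | 3, 0 | 0, 3 => Some true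
  | _, _ => None
  end.

Definition veer_compatible (x y : 'I_4) (v : bool) : bool :=
  side_veer x y != Some (~~ v).

Lemma I4_cases (x : 'I_4) : [\/ x = vN, x = vE, x = vS | x = vW].
Proof.
have := ltn_ord x; case: x => [[|[|[|[|m]]]] ?] _ //;
  [constructor 1 | constructor 2 | constructor 3 | constructor 4]; exact: val_inj.
Qed.

Lemma odd_perm_ext (g h : {perm 'I_4}) : g =1 h -> odd_perm g = odd_perm h.
Proof. by move=> gh; congr odd_perm; apply/permP. Qed.

(* Classification of the gluing g of the top face ESW of a tetrahedron t to
   a bottom face of the tetrahedron above it: g is orientation reversing,
   sends N (the vertex opposite the face) to E or W, and must respect the
   veers of the three edges ES (right), SW (left) and EW (veer vt). *)
Lemma top_gluing_cases (g : {perm 'I_4}) (vt : bool) :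
  odd_perm g -> (g vN == vE) || (g vN == vW) ->
  veer_compatible (g vE) (g vS) true -> veer_compatible (g vS) (g vW) false ->
  veer_compatible (g vE) (g vW) vt ->
  if vt then
    (g vN = vE /\ g vE = vN /\ g vS = vS /\ g vW = vW) \/
    (g vN = vW /\ g vE = vS /\ g vS = vN /\ g vW = vE)
  else
    (g vN = vE /\ g vE = vW /\ g vS = vN /\ g vW = vS) \/
    (g vN = vW /\ g vE = vE /\ g vS = vS /\ g vW = vN).
Proof.
move=> g_odd gN cES cSW cEW.
have g_inj := @perm_inj _ g.
have even1 : odd_perm (tperm vN vE * tperm vS vW) = false by rewrite odd_permM !odd_tperm.
have even2 : odd_perm (tperm vN vW * tperm vE vS) = false by rewrite odd_permM !odd_tperm.
case: (I4_cases (g vN)) => HN; case: (I4_cases (g vE)) => HE;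
case: (I4_cases (g vS)) => HS; case: (I4_cases (g vW)) => HW;
rewrite ?HN ?HE ?HS ?HW in gN cES cSW cEW *; case: vt cEW => cEW //;
try (by left); try (by right);
try (by move: (g_inj vN vE); rewrite HN HE => /(_ erefl));
try (by move: (g_inj vN vS); rewrite HN HS => /(_ erefl));
try (by move: (g_inj vN vW); rewrite HN HW => /(_ erefl));
try (by move: (g_inj vE vS); rewrite HE HS => /(_ erefl));
try (by move: (g_inj vE vW); rewrite HE HW => /(_ erefl));
try (by move: (g_inj vS vW); rewrite HS HW => /(_ erefl)).
(* the remaining gluings are the two even double transpositions *)
all: exfalso; move: g_odd;
 first [ rewrite (@odd_perm_ext g (tperm vN vE * tperm vS vW)) ?even1 //;
         move=> x; case: (I4_cases x) => ->; rewrite permM !permE /=;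
         by rewrite ?HN ?HE ?HS ?HW
       | rewrite (@odd_perm_ext g (tperm vN vW * tperm vE vS)) ?even2 //;
         move=> x; case: (I4_cases x) => ->; rewrite permM !permE /=;
         by rewrite ?HN ?HE ?HS ?HW ].
Qed.

(* For a tetrahedron whose top edge EW has veer vt, [same_side vt] is the
   endpoint s of the top edge for which the side edge sS also has veer vt,
   and [other_side vt] is the other endpoint o.  The tetrahedron relation
   then reads NS = EW + Ns + So. *)
Definition same_side (vt : bool) : 'I_4 := if vt then vE else vW.
Definition other_side (vt : bool) : 'I_4 := if vt then vW else vE.

(* The gluing of the top face of t sends the side edge sS onto the bottom
   edge NS of the tetrahedron above, and the vertex o to its third vertex. *)
Lemma top_gluing (g : {perm 'I_4}) (vt : bool) :
  odd_perm g -> (g vN == vE) || (g vN == vW) ->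
  veer_compatible (g vE) (g vS) true -> veer_compatible (g vS) (g vW) false ->
  veer_compatible (g vE) (g vW) vt ->
  g (other_side vt) = (if g vN == vE then vW else vE) /\
  ((g (same_side vt) = vN /\ g vS = vS) \/ (g (same_side vt) = vS /\ g vS = vN)).
Proof.
move=> g_odd gN cES cSW cEW; have := @top_gluing_cases g vt g_odd gN cES cSW cEW.
by case: vt cEW => _ /= [] [-> [-> [-> ->]]]; split=> //; [left | right | right | left].
Qed.

Section VeeringRelations.
Variables (T Ed F : finType) (D : triangulation_data T Ed F).
Variables (r : nat) (omega : F -> 'rV[int]_r) (lam : T -> 'I_4 -> 'I_4 -> 'rV[int]_r).
Hypothesis veeringD : is_veering D.
Hypothesis liftD : lift_data D omega lam.

Local Notation ind b := ((b : bool)%:R : KG r).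

Lemma tedgeC t a b : tedge D t a b = tedge D t b a.
Proof. by case: veeringD. Qed.

Lemma lamC t a b : lam t a b = lam t b a.
Proof. by case: liftD. Qed.

Lemma top_face_below t : lowT D (tface D t vN) = t /\ lowv D (tface D t vN) = vN.
Proof.
have [_ [_ [up_face [face_cases _]]]] := veeringD.
case: (face_cases _ t vN erefl) => [[<- <-] // | [_ Nup]].
by have := (up_face (tface D t vN)).2; rewrite -Nup.
Qed.

Lemma bottom_face_above t v : (v == vE) || (v == vW) ->
  upT D (tface D t v) = t /\ upv D (tface D t v) = v.
Proof.
have [_ [low_face [_ [face_cases _]]]] := veeringD; move=> vEW.
case: (face_cases _ t v erefl) => [[_ vlow] | [<- <-] //].
by have := (low_face (tface D t v)).2; move: vEW; rewrite -vlow; case/orP=> /eqP->.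
Qed.

Lemma glued_tedge f a b : a != lowv D f -> b != lowv D f -> a != b ->
  tedge D (upT D f) (glue D f a) (glue D f b) = tedge D (lowT D f) a b.
Proof.
have [_ [_ [_ [_ [_ [_ [edge_classes _]]]]]]] := veeringD; move=> af bf ab.
symmetry; apply/edge_classes => //; first by rewrite (inj_eq (@perm_inj _ _)).
left; apply: connect1; apply/existsP; exists f; apply/orP; left.
by rewrite /glue_step /= af bf !eqxx.
Qed.

Lemma glued_lam f a b : a != lowv D f -> b != lowv D f -> a != b ->
  lam (upT D f) (glue D f a) (glue D f b) = lam (lowT D f) a b - omega f.
Proof.
by case: liftD => _ lam_glue af bf ab; rewrite lam_glue // addrC addKr.
Qed.

Lemma side_edge_veers t :
  [/\ veer D (tedge D t vN vE) = false, veer D (tedge D t vS vW) = false,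
      veer D (tedge D t vE vS) = true & veer D (tedge D t vW vN) = true].
Proof.
have [_ [_ [_ [_ [_ [_ [_ [_ [_ [_ [_ veers]]]]]]]]]]] := veeringD.
by have [? [? [? ?]]] := veers t.
Qed.

Lemma side_veerP t x y v : side_veer x y = Some v -> veer D (tedge D t x y) = v.
Proof.
have [NE SW ES WN] := side_edge_veers t.
case: (I4_cases x) => ->; case: (I4_cases y) => -> //= [<-];
  by rewrite ?NE ?SW ?ES ?WN // tedgeC ?NE ?SW ?ES ?WN.
Qed.

Lemma glued_veer_compatible f a b : a != lowv D f -> b != lowv D f -> a != b ->
  veer_compatible (glue D f a) (glue D f b) (veer D (tedge D (lowT D f) a b)).
Proof.
move=> af bf ab; rewrite /veer_compatible.
case E: (side_veer _ _) => [w|] //.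
by rewrite -glued_tedge // (side_veerP _ E); case: w {E}.
Qed.

(* The relation ab = ac + bc of the face abc of the tetrahedron t, as the
   coefficient of the edge e in  ab - ac - bc  (the lifts of ac and bc are
   compared with that of ab through the monomials). *)
Definition face_rel (t : T) (a b c : 'I_4) (e : Ed) : KG r :=
  ind (e == tedge D t a b)
  - ind (e == tedge D t a c) * mono (lam t a c - lam t a b)
  - ind (e == tedge D t b c) * mono (lam t b c - lam t a b).

Lemma face_relC t a b c e : face_rel t a b c e = face_rel t b a c e.
Proof. by rewrite /face_rel (tedgeC t b a) (lamC t b a) addrAC. Qed.

Lemma Ltricoef_face_rel f e :
  Ltricoef D lam f e = face_rel (upT D f) vN vS (if upv D f == vE then vW else vE) e.
Proof. by []. Qed.

Lemma face_rel_glue f a b c e :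
  a != lowv D f -> b != lowv D f -> c != lowv D f -> a != b -> a != c -> b != c ->
  face_rel (upT D f) (glue D f a) (glue D f b) (glue D f c) e =
  face_rel (lowT D f) a b c e.
Proof.
move=> af bf cf ab ac bc.
have shift (x y : 'rV[int]_r) : (x - omega f) - (y - omega f) = x - y.
  by rewrite opprB addrA subrK.
by rewrite /face_rel !glued_tedge // !glued_lam // !shift.
Qed.

End VeeringRelations.

Section Tetrahedron.
Variables (T Ed F : finType) (D : triangulation_data T Ed F).
Variables (r : nat) (omega : F -> 'rV[int]_r) (lam : T -> 'I_4 -> 'I_4 -> 'rV[int]_r).
Hypothesis veeringD : is_veering D.
Hypothesis liftD : lift_data D omega lam.
Variable t : T.

Local Notation ind b := ((b : bool)%:R : KG r).
Local Notation vt := (veer D (tedge D t vE vW)).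
Local Notation s := (same_side vt).
Local Notation o := (other_side vt).

Lemma top_face_rel e :
  Ltricoef D lam (tface D t vN) e = face_rel D lam t s vS o e.
Proof.
have [lowf lowvf] := top_face_below veeringD t.
set f := tface D t vN in lowf lowvf *; set g := glue D f.
have [_ [_ [up_face [_ [glueN [glue_odd _]]]]]] := veeringD.
have [_ SW ES _] := side_edge_veers veeringD t.
have compat a b : a != vN -> b != vN -> a != b ->
    veer_compatible (g a) (g b) (veer D (tedge D t a b)).
  by rewrite -lowvf -lowf; exact: glued_veer_compatible.
have gN : g vN = upv D f by rewrite -lowvf glueN.
have gN_EW : (g vN == vE) || (g vN == vW) by rewrite gN (up_face f).2.
have cES : veer_compatible (g vE) (g vS) true by rewrite -ES; apply: compat.
have cSW : veer_compatible (g vS) (g vW) false by rewrite -SW; apply: compat.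
have [g_o g_sS] := top_gluing (glue_odd f) gN_EW cES cSW (compat vE vW isT isT isT).
rewrite Ltricoef_face_rel -gN -g_o.
have -> : face_rel D lam (upT D f) vN vS (g o) e =
          face_rel D lam (upT D f) (g s) (g vS) (g o) e.
  by case: g_sS => [[-> ->] | [-> ->]]; rewrite // (face_relC veeringD liftD).
rewrite (face_rel_glue veeringD liftD); first by rewrite lowf.
all: by rewrite ?lowvf; case: vt.
Qed.

Lemma bottom_face_rel e :
  Ltricoef D lam (tface D t o) e = face_rel D lam t vN vS s e.
Proof.
have oEW : (o == vE) || (o == vW) by case: vt.
rewrite Ltricoef_face_rel.
have [-> ->] := bottom_face_above veeringD t oEW.
by case: vt.
Qed.

Lemma Lcoef_bottom_edge e :
  Lcoef D lam (tedge D t vN vS) e =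
  ind (tedge D t vN vS == e) -
  (ind (e == tedge D t vE vW) * mono (lam t vE vW - lam t vN vS) +
   \sum_(p <- side_edges | veer D (tedge D t p.1 p.2) != vt)
      ind (e == tedge D t p.1 p.2) * mono (lam t p.1 p.2 - lam t vN vS)).
Proof.
have [_ [_ [_ [_ [_ [_ [_ [_ [_ [bottom_bij _]]]]]]]]]] := veeringD.
rewrite /Lcoef (big_pred1 t) // => t' /=.
by rewrite (inj_eq (bij_inj bottom_bij)).
Qed.

Lemma tetrahedron_rel e :
  Lcoef D lam (tedge D t vN vS) e =
  Ltricoef D lam (tface D t o) e +
  mono (lam t s vS - lam t vN vS) * Ltricoef D lam (tface D t vN) e.
Proof.
rewrite Lcoef_bottom_edge bottom_face_rel top_face_rel /face_rel.
have [NE SW ES WN] := side_edge_veers veeringD t.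
rewrite /side_edges !big_cons big_nil /= NE SW ES WN.
rewrite [tedge D t vN vS == e]eq_sym.
(* orient all edges as NS, EW, NE, NW, ES, SW, then route the translations
   of the edges of the top face through that of sS *)
case: vt => /=.
- rewrite (tedgeC veeringD t vS vE) (lamC liftD t vS vE).
  rewrite (mono_split (lam t vE vW) (lam t vE vS)).
  rewrite (mono_split (lam t vS vW) (lam t vE vS)).
  ring.
- rewrite (tedgeC veeringD t vW vN) (lamC liftD t vW vN).
  rewrite (tedgeC veeringD t vW vS) (lamC liftD t vW vS).
  rewrite (tedgeC veeringD t vW vE) (lamC liftD t vW vE).
  rewrite (tedgeC veeringD t vS vE) (lamC liftD t vS vE).
  rewrite (mono_split (lam t vE vS) (lam t vS vW)).
  rewrite (mono_split (lam t vE vW) (lam t vS vW)).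
  ring.
Qed.

End Tetrahedron.

Section Factorization.
Variables (T Ed F : finType) (D : triangulation_data T Ed F).
Variables (r : nat) (omega : F -> 'rV[int]_r) (lam : T -> 'I_4 -> 'I_4 -> 'rV[int]_r).
Hypothesis veeringD : is_veering D.
Hypothesis liftD : lift_data D omega lam.

Local Notation ind b := ((b : bool)%:R : KG r).

Lemma Lmx_factorization : exists2 C : 'M[KG r]_(#|Ed|, #|F|),
  (forall i j, inZG (C i j)) & Lmx D lam = C *m Ltrimx D lam.
Proof.
have [_ [_ [_ [_ [_ [_ [_ [_ [_ [[tet _ tetK] _]]]]]]]]]] := veeringD.
pose vt b := veer D (tedge D (tet b) vE vW).
pose face_weight b f :=
  ind (f == tface D (tet b) (other_side (vt b))) +
  ind (f == tface D (tet b) vN) *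
    mono (lam (tet b) (same_side (vt b)) vS - lam (tet b) vN vS).
exists (\matrix_(i, j) face_weight (enum_val i) (enum_val j)).
  move=> i j; rewrite mxE; apply: inZG_add; first exact: inZG_nat.
  by apply: inZG_mul; [exact: inZG_nat | exact: inZG_mono].
apply/matrixP => i k; rewrite !mxE.
set b := enum_val i; set e := enum_val k.
have -> : Lcoef D lam b e = \sum_f face_weight b f * Ltricoef D lam f e.
  rewrite -{1}[b]tetK (tetrahedron_rel veeringD liftD).
  rewrite /face_weight; under eq_bigr do rewrite mulrDl.
  rewrite big_split /= (bigD1 (tface D (tet b) (other_side (vt b)))) //= eqxx mul1r.
  rewrite big1 ?addr0; last by move=> f /negbTE ->; rewrite mul0r.
  rewrite (bigD1 (tface D (tet b) vN)) //= eqxx mul1r big1 ?addr0 //.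
  by move=> f /negbTE ->; rewrite !mul0r.
symmetry; under eq_bigr do rewrite !mxE.
by rewrite -(big_enum_val (fun f => face_weight b f * Ltricoef D lam f e)).
Qed.

End Factorization.

Theorem mainTheorem3 (T Ed F : finType) (D : triangulation_data T Ed F)
    (r : nat) (omega : F -> 'rV[int]_r) (lam : T -> 'I_4 -> 'I_4 -> 'rV[int]_r) :
  is_veering D -> H1_basis D omega -> lift_data D omega lam ->
  (exists C : 'M[KG r]_(#|Ed|, #|F|),
      (forall i j, inZG (C i j)) /\ Lmx D lam = C *m Ltrimx D lam) /\
  (forall theta : KG r, is_gcdZG (Ltri_minor D lam) theta ->
      dvdZG theta (veering_poly D lam)).
Proof.
move=> veeringD _ liftD.
have [C CZ LC] := Lmx_factorization veeringD liftD.
split; first by exists C.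
move=> theta [_ [theta_dvd_minors _]].
rewrite /veering_poly LC; apply: dvdZG_det_mulmx => // s s_inj.
by apply: theta_dvd_minors; exists s.
Qed.
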